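(* Let $n\ge 3$ and $1\le k\le n-1$. Then \[ I_{k-1} \subseteq \bigcap_{1\le i<j\le n-1} P_{ij} \;\cap\; \mathcal J_{K_n} \;\cap\; \bigcap_{t=k}^{n-1}P_{tn}. \]
   Context: Let $\Bbbk$ be a field and $R=\Bbbk[x_1,\dots,x_n,y_1,\dots,y_n]$ the standard graded polynomial ring. For $1\le i<j\le n$ put $f_{ij}=x_iy_j-x_jy_i$ and $g_{ij}=x_ix_j-y_iy_j$. The parity binomial edge ideal of the complete graph $K_n$ is $\mathcal I_{K_n}=(g_{ij}\mid 1\le i<j\le n)$. Let $\mathcal J_{K_n}=\mathcal I_{K_n}:(\prod_{i=1}^n x_iy_i)^\infty=\bigcup_{t\ge1}\mathcal I_{K_n}:(\prod_{i=1}^n x_iy_i)^t$. For $I\subseteq[n]$ let $\mathfrak m_I=(x_i,y_i\mid i\in I)$, and for $1\le i<j\le n$ let $P_{ij}=(g_{ij})+\mathfrak m_{[n]\setminus\{i,j\}}$. Define $I_0=\mathcal I_{K_n}$ and inductively $I_k=I_{k-1}+(f_{kn})$ for $1\le k\le n-1$. *)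

From HB Require Import structures.
From mathcomp Require Import all_boot all_order all_algebra.
Unset Printing Implicit Defensive.
Import GRing.Theory.
Local Open Scope ring_scope.

(* mpoly K m = K[z_0, ..., z_{m-1}], with z_{m-1} the outermost variable *)
Fixpoint mpoly (K : fieldType) (m : nat) : comNzRingType :=
  match m with
  | 0 => K
  | m'.+1 => ({poly mpoly K m'} : comNzRingType)
  end.

(* the variable z_j of mpoly K m (for j < m; junk value 0 otherwise) *)
Fixpoint mvar (K : fieldType) (m : nat) (j : nat) : mpoly K m :=
  match m return mpoly K m with
  | 0 => 0
  | m'.+1 => if j == m' then ('X : {poly mpoly K m'}) else (mvar K m' j)%:P
  end.

Definition in_ideal (A : comNzRingType) (G : A -> Prop) (f : A) : Prop :=
  exists s : seq (A * A)%type,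
    (forall p, p \in s -> G p.2) /\ f = \sum_(p <- s) p.1 * p.2.

(* R = K[x_1..x_n, y_1..y_n] with x_i = z_{i-1}, y_i = z_{n+i-1} *)
Definition Rn (K : fieldType) (n : nat) : comNzRingType := mpoly K (2 * n).
Definition xv (K : fieldType) (n i : nat) : Rn K n := mvar K (2 * n) i.-1.
Definition yv (K : fieldType) (n i : nat) : Rn K n := mvar K (2 * n) (n + i.-1).

Definition fb (K : fieldType) (n i j : nat) : Rn K n :=
  xv K n i * yv K n j - xv K n j * yv K n i.
Definition gb (K : fieldType) (n i j : nat) : Rn K n :=
  xv K n i * xv K n j - yv K n i * yv K n j.

Definition IKn (K : fieldType) (n : nat) : Rn K n -> Prop :=
  in_ideal _ (fun h => exists i j, [/\ (1 <= i)%N, (i < j)%N, (j <= n)%N & h = gb K n i j]).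

(* J_{K_n} = I_{K_n} : (prod_i x_i y_i)^infty *)
Definition JKn (K : fieldType) (n : nat) (f : Rn K n) : Prop :=
  exists t : nat, (1 <= t)%N /\
    IKn K n ((\prod_(1 <= i < n.+1) (xv K n i * yv K n i)) ^+ t * f).

Definition Pij (K : fieldType) (n i j : nat) : Rn K n -> Prop :=
  in_ideal _ (fun h => h = gb K n i j \/
    exists l, [/\ (1 <= l)%N, (l <= n)%N, l != i, l != j & (h = xv K n l \/ h = yv K n l)]).

Definition Ik (K : fieldType) (n k : nat) : Rn K n -> Prop :=
  in_ideal _ (fun h => (exists i j, [/\ (1 <= i)%N, (i < j)%N, (j <= n)%N & h = gb K n i j])
    \/ (exists s, [/\ (1 <= s)%N, (s <= k)%N & h = fb K n s n])).

(* A binomial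
   g_ab lies in P_ij either because it is the generator g_ij or because one of
   a, b lies outside {i, j}, so that its variables are in P_ij; the same
   argument puts f_sn (s < k) in P_ij (j < n, via x_n, y_n) and in P_tn (via
   x_s, y_s).  In J_{K_n}, a single power of prod x_i y_i suffices: choosing
   l outside {s, n}, the identity x_l f_sn = y_n g_sl - y_s g_nl puts
   x_l f_sn, hence (prod x_i y_i) f_sn, in I_{K_n}. *)
From HB Require Import structures.
From mathcomp Require Import all_boot all_order all_algebra.
From mathcomp Require Import ring zify.
Import GRing.Theory.
Local Open Scope ring_scope.

Section Ideals.
Variable A : comNzRingType.
Implicit Types (G H : A -> Prop) (c u v : A).

Lemma in_ideal0 G : in_ideal _ G 0.
Proof. by exists [::]; rewrite big_nil. Qed.

Lemma in_ideal_gen G u : G u -> in_ideal _ G u.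
Proof.
move=> Gu; exists [:: (1, u)]; split; last by rewrite big_seq1 mul1r.
by move=> p; rewrite inE => /eqP ->.
Qed.

Lemma in_idealD G u v : in_ideal _ G u -> in_ideal _ G v -> in_ideal _ G (u + v).
Proof.
move=> [s [Gs ->]] [t [Gt ->]]; exists (s ++ t); rewrite big_cat; split=> //.
by move=> p; rewrite mem_cat => /orP[]; [apply: Gs | apply: Gt].
Qed.

Lemma in_idealMl G c u : in_ideal _ G u -> in_ideal _ G (c * u).
Proof.
move=> [s [Gs ->]]; exists [seq (c * p.1, p.2) | p <- s]; split.
  by move=> p /mapP[q qs ->]; apply: (Gs q).
by rewrite big_map big_distrr; apply: eq_bigr => p _; rewrite /= mulrA.
Qed.

Lemma in_idealMr G c u : in_ideal _ G u -> in_ideal _ G (u * c).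
Proof. by rewrite mulrC; apply: in_idealMl. Qed.

Lemma in_idealB G u v : in_ideal _ G u -> in_ideal _ G v -> in_ideal _ G (u - v).
Proof. by move=> Gu Gv; rewrite -mulN1r; apply/in_idealD/in_idealMl. Qed.

Lemma in_ideal_mull_sub G H c u :
  (forall g, G g -> in_ideal _ H (c * g)) -> in_ideal _ G u -> in_ideal _ H (c * u).
Proof.
move=> GH [s [Gs ->]]; elim: s Gs => [|p s IHs] Gs.
  by rewrite big_nil mulr0; apply: in_ideal0.
rewrite big_cons mulrDr; apply: in_idealD.
  by rewrite mulrCA; apply/in_idealMl/GH/Gs/mem_head.
by apply: IHs => q qs; apply: Gs; rewrite inE qs orbT.
Qed.

Lemma in_ideal_sub G H u :
  (forall g, G g -> in_ideal _ H g) -> in_ideal _ G u -> in_ideal _ H u.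
Proof.
move=> GH; rewrite -[u in in_ideal _ H u]mul1r; apply: in_ideal_mull_sub => g.
by rewrite mul1r; apply: GH.
Qed.

End Ideals.

Section BinomialIdeals.
Variables (K : fieldType) (n : nat).

Lemma gbC a b : gb K n a b = gb K n b a.
Proof. by rewrite /gb (mulrC (xv K n a)) (mulrC (yv K n a)). Qed.

Lemma IKn_gb a b : (1 <= a <= n)%N -> (1 <= b <= n)%N -> a != b ->
  IKn K n (gb K n a b).
Proof.
move=> /andP[a1 an] /andP[b1 bn]; rewrite neq_ltn => /orP[] ab.
  by apply: in_ideal_gen; exists a, b.
by rewrite gbC; apply: in_ideal_gen; exists b, a.
Qed.

Lemma prod_xy_mulr l : (1 <= l <= n)%N ->
  exists r, \prod_(1 <= i < n.+1) (xv K n i * yv K n i) = xv K n l * r.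
Proof.
move=> l_range; have l_iota : l \in index_iota 1 n.+1 by rewrite mem_index_iota.
by rewrite (bigD1_seq l l_iota (iota_uniq _ _)) /= -mulrA; eexists.
Qed.

Lemma xfb_gb l s :
  xv K n l * fb K n s n =
  yv K n n * gb K n s l - yv K n s * gb K n n l.
Proof. by rewrite /fb /gb; ring. Qed.

Lemma IKn_prod_fb s : (3 <= n)%N -> (1 <= s < n)%N ->
  IKn K n (\prod_(1 <= i < n.+1) (xv K n i * yv K n i) * fb K n s n).
Proof.
move=> n3 /andP[s1 sn].
have [l l_range [ls ln]] : exists2 l, (1 <= l <= n)%N & l != s /\ l != n.
  by exists (if s == 1%N then 2%N else 1%N); case: ifP => /eqP; repeat split; lia.
have [r ->] := prod_xy_mulr _ l_range.
rewrite mulrAC xfb_gb; apply/in_idealMr/in_idealB; apply/in_idealMl/IKn_gb;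
  by [ | rewrite eq_sym | lia].
Qed.

Section PrimeComponent.
Variables i j : nat.

Lemma Pij_var l : (1 <= l <= n)%N -> l != i -> l != j ->
  Pij K n i j (xv K n l) /\ Pij K n i j (yv K n l).
Proof.
move=> /andP[l1 ln] li lj.
by split; apply: in_ideal_gen; right; exists l; split; by [ | left | right].
Qed.

Lemma Pij_gb a b : (i < j)%N -> (1 <= a)%N -> (a < b)%N -> (b <= n)%N ->
  Pij K n i j (gb K n a b).
Proof.
move=> ij a1 ab bn.
have [/andP[ai aj] | a_ij] := boolP ((a != i) && (a != j)).
  have [xa ya] : Pij K n i j (xv K n a) /\ Pij K n i j (yv K n a).
    by apply: Pij_var => //; lia.
  by apply: in_idealB; apply: in_idealMr.
have [/andP[bi bj] | b_ij] := boolP ((b != i) && (b != j)).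
  have [xb yb] : Pij K n i j (xv K n b) /\ Pij K n i j (yv K n b).
    by apply: Pij_var => //; lia.
  by apply: in_idealB; apply: in_idealMl.
have [-> ->] : a = i /\ b = j.
  by move: a_ij b_ij; rewrite !negb_and !negbK => /orP[] /eqP ? /orP[] /eqP ?; lia.
by apply: in_ideal_gen; left.
Qed.

Lemma Pij_fb_of_var l s : l \in [:: s; n] -> (1 <= l <= n)%N -> l != i -> l != j ->
  Pij K n i j (fb K n s n).
Proof.
move=> l_sn l_range li lj; have [xl yl] := Pij_var _ l_range li lj.
move: l_sn; rewrite !inE => /orP[] /eqP l_eq; rewrite /fb -l_eq in xl yl *.
  by apply: in_idealB; [apply: in_idealMr | apply: in_idealMl].
by apply: in_idealB; [apply: in_idealMl | apply: in_idealMr].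
Qed.

End PrimeComponent.
End BinomialIdeals.

Theorem lemma3p2 (K : fieldType) (n k : nat) :
  (3 <= n)%N -> (1 <= k)%N -> (k <= n - 1)%N ->
  forall f : Rn K n, Ik K n (k - 1) f ->
    (forall i j, (1 <= i)%N -> (i < j)%N -> (j <= n - 1)%N -> Pij K n i j f) /\
    JKn K n f /\
    (forall t, (k <= t)%N -> (t <= n - 1)%N -> Pij K n t n f).
Proof.
move=> n3 k1 kn f If; split; [|split].
- move=> i j i1 ij jn.
  apply: in_ideal_sub If => _ [[a [b [a1 ab bn ->]]]|[s [s1 sk ->]]].
    exact: Pij_gb.
  by apply: (@Pij_fb_of_var K n i j n); rewrite ?inE ?eqxx ?orbT //; lia.
- exists 1%N; split=> //; rewrite expr1.
  apply: in_ideal_mull_sub If => _ [[a [b [a1 ab bn ->]]]|[s [s1 sk ->]]].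
    by apply/in_idealMl/in_ideal_gen; exists a, b.
  by apply: IKn_prod_fb => //; lia.
- move=> t kt tn.
  apply: in_ideal_sub If => _ [[a [b [a1 ab bn ->]]]|[s [s1 sk ->]]].
    by apply: Pij_gb => //; lia.
  by apply: (@Pij_fb_of_var K n t n s); rewrite ?inE ?eqxx //; lia.
Qed.
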